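(* Let $n,m,T$ be positive integers, $\epsilon\ge 0$, and let $x(0),\dots,x(T)\in\mathbb{R}^n$ and $u(0),\dots,u(T-1)\in\mathbb{R}^m$ be given data, with $X_1:=[x(1)\ \cdots\ x(T)]$, $X_0:=[x(0)\ \cdots\ x(T-1)]$, $U_0:=[u(0)\ \cdots\ u(T-1)]$. Consider the two feasibility problems: (E) find symmetric $P\in\mathbb{R}^{n\times n}$, $Y\in\mathbb{R}^{m\times n}$, and scalars $\beta,\alpha$ with $\alpha\ge 0$, $\beta>0$, $P\succ 0$ and $$M(P,Y,\beta)-\alpha\begin{bmatrix} I & X_1\\ 0 & -X_0\\ 0 & -U_0\\ 0 & 0\end{bmatrix}\begin{bmatrix} T\epsilon I & 0\\ 0 & -I\end{bmatrix}\begin{bmatrix} I & X_1\\ 0 & -X_0\\ 0 & -U_0\\ 0 & 0\end{bmatrix}^\top\succeq 0;$$ (I) find symmetric $P\in\mathbb{R}^{n\times n}$, $Y\in\mathbb{R}^{m\times n}$, and scalars $\beta,\tau_0,\dots,\tau_{T-1}$ with $\beta>0$, $\tau_i\ge0$ for all $i$, $P\succ 0$ and $$M(P,Y,\beta)-\sum_{i=0}^{T-1}\tau_i\begin{bmatrix} I & x(i+1)\\ 0 & -x(i)\\ 0 & -u(i)\\ 0 & 0\end{bmatrix}\begin{bmatrix}\epsilon I & 0\\ 0 & -1\end{bmatrix}\begin{bmatrix} I & x(i+1)\\ 0 & -x(i)\\ 0 & -u(i)\\ 0 & 0\end{bmatrix}^\top\succeq 0,$$ where $M(P,Y,\beta):=\begin{bmatrix}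 P-\beta I & 0 & 0 & 0\\ 0 & -P & -Y^\top & 0\\ 0 & -Y & 0 & Y\\ 0 & 0 & Y^\top & P\end{bmatrix}$. If problem (E) is feasible, then problem (I) is feasible.
   Context: $\succ$ ($\succeq$) denote positive definiteness (semidefiniteness). In $M(P,Y,\beta)$ the block rows/columns have sizes $n,n,m,n$; in the $4\times 2$ block matrices the row-block sizes are $n,n,m,n$ and the column-block sizes are $n$ and $T$ (in (E)) or $n$ and $1$ (in (I)); zero and identity blocks have compatible dimensions. *)

From mathcomp Require Import all_boot all_order all_algebra.
Set Implicit Arguments. Unset Strict Implicit. Unset Printing Implicit Defensive.
Import Order.TTheory GRing.Theory Num.Theory.
Local Open Scope ring_scope.

Definition posdef (R : realFieldType) (k : nat) (A : 'M[R]_k) : Prop :=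
  A^T = A /\ forall v : 'cV[R]_k, v != 0 -> 0 < (v^T *m A *m v) 0 0.
Definition psd (R : realFieldType) (k : nat) (A : 'M[R]_k) : Prop :=
  A^T = A /\ forall v : 'cV[R]_k, 0 <= (v^T *m A *m v) 0 0.

Definition X1mx (R : realFieldType) (n T : nat) (x : nat -> 'cV[R]_n) : 'M[R]_(n, T) :=
  \matrix_(i < n, j < T) x j.+1 i 0.
Definition X0mx (R : realFieldType) (n T : nat) (x : nat -> 'cV[R]_n) : 'M[R]_(n, T) :=
  \matrix_(i < n, j < T) x j i 0.
Definition U0mx (R : realFieldType) (m T : nat) (u : nat -> 'cV[R]_m) : 'M[R]_(m, T) :=
  \matrix_(i < m, j < T) u j i 0.

Definition Mmx (R : realFieldType) (n m : nat) (P : 'M[R]_n) (Y : 'M[R]_(m, n)) (beta : R)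
  : 'M[R]_(n + (n + (m + n))) :=
  block_mx (P - beta%:M) 0 0
    (block_mx (- P) (row_mx (- Y^T) 0) (col_mx (- Y) 0)
              (block_mx 0 Y Y^T P)).

Definition Bmx (R : realFieldType) (n m k : nat)
  (A : 'M[R]_(n, k)) (B : 'M[R]_(n, k)) (C : 'M[R]_(m, k)) : 'M[R]_(n + (n + (m + n)), n + k) :=
  col_mx (row_mx 1%:M A) (col_mx (row_mx 0 (- B)) (col_mx (row_mx 0 (- C)) 0)).

Definition Dmx (R : realFieldType) (n k : nat) (c : R) : 'M[R]_(n + k) :=
  block_mx (c%:M) 0 0 (- 1%:M).

From mathcomp Require Import all_boot all_order all_algebra.
Import Order.TTheory GRing.Theory Num.Theory.
Local Open Scope ring_scope.
Set Implicit Arguments. Unset Strict Implicit.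

(* Take every multiplier tau_i equal to alpha: the two inequalities then become
   identical.  Splitting the columns of [Bmx A B C] into the constant block
   E = [I; 0; 0; 0] and the data block Z = [A; -B; -C; 0], the middle factor
   [Dmx] turns the product into c E E^T - Z Z^T.  Since Z Z^T is the sum of the
   outer products of the columns of Z, and the i-th column of the aggregated
   data block is the data block of the i-th sample, the T sample terms with
   c = eps add up to the aggregated term with c = T eps. *)

Lemma mulmx_sum_col_row (R : pzSemiRingType) (p q r : nat)
    (A : 'M[R]_(p, q)) (B : 'M[R]_(q, r)) :
  A *m B = \sum_(j < q) col j A *m row j B.
Proof.
apply/matrixP => i k; rewrite !mxE summxE; apply: eq_bigr => j _.
by rewrite !mxE big_ord1 !mxE.
Qed.

Lemma mulmx_tr_sum_col (R : comPzSemiRingType) (p q : nat) (Z : 'M[R]_(p, q)) :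
  Z *m Z^T = \sum_(j < q) col j Z *m (col j Z)^T.
Proof. by rewrite mulmx_sum_col_row; under eq_bigr do rewrite -tr_col. Qed.

Section SampleDecomposition.
Variables (R : realFieldType) (n m : nat).

Definition data_mx k (A B : 'M[R]_(n, k)) (C : 'M[R]_(m, k))
  : 'M[R]_(n + (n + (m + n)), k) :=
  col_mx A (col_mx (- B) (col_mx (- C) 0)).

Lemma BmxE k (A B : 'M[R]_(n, k)) (C : 'M[R]_(m, k)) :
  Bmx A B C = row_mx (col_mx 1%:M 0) (data_mx A B C).
Proof.
rewrite /Bmx -(row_mx0 _ n n k).
by do 3 rewrite -block_mxEv block_mxEh; rewrite !col_mx0.
Qed.

Lemma mul_row_Dmx_tr N k (c : R) (E : 'M[R]_(N, n)) (Z : 'M[R]_(N, k)) :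
  row_mx E Z *m Dmx n k c *m (row_mx E Z)^T = c *: (E *m E^T) - Z *m Z^T.
Proof.
rewrite /Dmx mul_row_block !mulmx0 addr0 add0r tr_row_mx mul_row_col.
by rewrite mul_mx_scalar mulmxN mulmx1 -scalemxAl mulNmx.
Qed.

Lemma col_data_mx T (x : nat -> 'cV[R]_n) (u : nat -> 'cV[R]_m) (j : 'I_T) :
  col j (data_mx (X1mx T x) (X0mx T x) (U0mx T u)) = data_mx (x j.+1) (x j) (u j).
Proof.
rewrite /data_mx !col_col_mx col0.
by congr (col_mx _ (col_mx _ (col_mx _ _))); apply/matrixP => a b; rewrite !mxE ord1.
Qed.

Lemma sum_sample_Bmx_Dmx T (eps : R) (x : nat -> 'cV[R]_n) (u : nat -> 'cV[R]_m) :
  \sum_(i < T) Bmx (x i.+1) (x i) (u i) *m Dmx n 1 eps *m (Bmx (x i.+1) (x i) (u i))^T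
  = Bmx (X1mx T x) (X0mx T x) (U0mx T u) *m Dmx n T (T%:R * eps)
      *m (Bmx (X1mx T x) (X0mx T x) (U0mx T u))^T.
Proof.
under eq_bigr do rewrite BmxE mul_row_Dmx_tr.
rewrite BmxE mul_row_Dmx_tr (mulmx_tr_sum_col (data_mx _ _ _)) sumrB sumr_const card_ord.
under [X in _ = _ - X]eq_bigr do rewrite col_data_mx.
by rewrite scalerMnl mulr_natl.
Qed.

End SampleDecomposition.

Theorem proposition2 (R : realFieldType) (n m T : nat) (eps : R)
  (x : nat -> 'cV[R]_n) (u : nat -> 'cV[R]_m) :
  (0 < n)%N -> (0 < m)%N -> (0 < T)%N -> 0 <= eps ->
  (exists (P : 'M[R]_n) (Y : 'M[R]_(m, n)) (beta alpha : R),
      [/\ P^T = P, 0 <= alpha, 0 < beta, posdef P &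
       psd (Mmx P Y beta -
            alpha *: (Bmx (X1mx T x) (X0mx T x) (U0mx T u)
                      *m Dmx n T (T%:R * eps)
                      *m (Bmx (X1mx T x) (X0mx T x) (U0mx T u))^T))]) ->
  (exists (P : 'M[R]_n) (Y : 'M[R]_(m, n)) (beta : R) (tau : 'I_T -> R),
      [/\ P^T = P, 0 < beta, (forall i, 0 <= tau i), posdef P &
       psd (Mmx P Y beta -
            \sum_(i < T) tau i *:
              (Bmx (x i.+1) (x i) (u i) *m Dmx n 1 eps *m (Bmx (x i.+1) (x i) (u i))^T))]).
Proof.
move=> _ _ _ _ [P [Y [beta [alpha [symP alpha_ge0 beta_gt0 P_pd E_psd]]]]].
exists P, Y, beta, (fun _ => alpha); split => //.
by rewrite -scaler_sumr sum_sample_Bmx_Dmx.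
Qed.
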